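(* For every integer $r \ge 2$ there exists an integer $N = N(r)$ such that for every integer $n \ge N$ there exists a graph $G=(V,E)$ with (i) $|V| = 7rn$; (ii) $500(\log r) r^2 n < |E| < 600 (\log r) r^2 n$; (iii) for every two disjoint sets $S, T \subseteq V$ with $|S| = |T| = n$, the number of edges of $G$ with both endpoints in $S \cup T$ and at least one endpoint in $S$ is at most $70 (\log r) n$.
   Context: $\log$ denotes the natural logarithm. *)

From mathcomp Require Import all_boot.
From Stdlib Require Import Reals.

Set Implicit Arguments. Unset Strict Implicit. Unset Printing Implicit Defensive.

(* A finite simple graph on vertex type V is given by its edge set E,
   a set of 2-element subsets of V. *)
Definition simple_edges (V : finType) (E : {set {set V}}) : Prop :=
  forall e, e \in E -> #|e| = 2%N.

Definition edges_ST (V : finType) (E : {set {set V}}) (S T : {set V}) : {set {set V}} :=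
  [set e in E | (e \subset S :|: T) && (e :&: S != set0)].

(* Take the random graph on 7rn vertices in which each pair is an edge
   independently with probability p = 22 ln r / n.  If X counts the edges in a
   fixed set of pairs, then E[x^X] <= exp((x - 1) E X) for x > 0, whence the
   Chernoff bounds P(X >= K), P(X <= K) <= exp((x - 1) E X - K ln x) for x > 1
   and x < 1 respectively.  The edge count has mean about 539 r^2 n ln r; with
   x = 21/20 and x = 49/50 it leaves (500, 600) r^2 n ln r with probability at
   most e^-n each.  For n-sets S, T at most 3n^2/2 pairs lie in S u T and meet
   S, so their mean edge count is at most 33 n ln r, and x = 2 bounds the
   probability of 70 n ln r such edges by exp((33 - 70 ln 2) n ln r); this beats
   the at most (7 e r)^(2n) choices of (S, T).  The three failure
   probabilities sum to less than 1, so some graph avoids all of them. *)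

From mathcomp Require Import all_boot all_algebra.
From mathcomp Require Import Rstruct.
From Stdlib Require Import Reals Lra Psatz.
Import order.Order.TTheory GRing.Theory Num.Theory.
Set Implicit Arguments.
Unset Strict Implicit.
Unset Printing Implicit Defensive.

Section RandomSubset.
Local Open Scope ring_scope.
Variables (R : numDomainType) (X : finType) (q : X -> R).

Definition pr_set (E : {set X}) : R :=
  \prod_e (if e \in E then q e else 1 - q e).

Definition Pr (B : pred {set X}) : R := \sum_(E | B E) pr_set E.

Lemma sum_pr_set_pow (A : {set X}) (x : R) :
  \sum_E pr_set E * x ^+ #|A :&: E| = \prod_(e in A) (1 + q e * (x - 1)).
Proof.
have -> : \prod_(e in A) (1 + q e * (x - 1)) =
          \prod_e (q e * (if e \in A then x else 1) + (1 - q e)).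
  rewrite big_mkcond; apply: eq_bigr => e _; case: (e \in A).
  - by rewrite mulrBr mulr1 addrCA addrC.
  - by rewrite mulr1 addrC subrK.
rewrite bigA_distr; apply: eq_bigr => E _.
rewrite -prodr_const big_mkcond -big_split /=; apply: eq_bigr => e _.
by rewrite inE; case: (e \in A); case: (e \in E); rewrite /= ?mulr1.
Qed.

Lemma sum_pr_set : \sum_E pr_set E = 1.
Proof.
have := sum_pr_set_pow set0 1; rewrite big_set0 => <-.
by apply: eq_bigr => E _; rewrite expr1n mulr1.
Qed.

Lemma pr_set_eq0 (E : {set X}) (e : X) : e \in E -> q e = 0 -> pr_set E = 0.
Proof. by move=> eE qe0; rewrite /pr_set (bigD1 e) //= eE qe0 mul0r. Qed.

Hypothesis q01 : forall e, 0 <= q e <= 1.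

Lemma pr_set_ge0 (E : {set X}) : 0 <= pr_set E.
Proof.
apply: prodr_ge0 => e _; have /andP[q0 q1] := q01 e.
by case: (e \in E); rewrite ?subr_ge0.
Qed.

Lemma Pr_predU (B1 B2 : pred {set X}) : Pr (predU B1 B2) <= Pr B1 + Pr B2.
Proof.
rewrite [Pr (predU _ _)]big_mkcond [Pr B1]big_mkcond [Pr B2]big_mkcond -big_split /=.
apply: ler_sum => E _; have := pr_set_ge0 E.
by case: (B1 E); case: (B2 E) => //= ?; rewrite ?addr0 ?add0r // lerDl.
Qed.

Lemma Pr_exists_le (I : finType) (P : pred I) (B : I -> pred {set X}) :
  Pr [pred E | [exists (i | P i), B i E]] <= \sum_(i | P i) Pr (B i).
Proof.
rewrite /Pr (exchange_big_dep predT) //=.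
rewrite [X in _ <= X](bigID [pred E | [exists (i | P i), B i E]]) /=.
rewrite -[X in X <= _]addr0 lerD //; last first.
  by apply: sumr_ge0 => E _; apply: sumr_ge0 => i _; exact: pr_set_ge0.
apply: ler_sum => E /existsP[i /andP[Pi BiE]].
rewrite (bigD1 i) ?Pi //= -[X in X <= _]addr0 lerD //.
by apply: sumr_ge0 => j _; exact: pr_set_ge0.
Qed.

Lemma Pr_le_moment (B : pred {set X}) (Y : {set X} -> R) (t : R) :
  (forall E, 0 <= Y E) -> (forall E, B E -> t <= Y E) ->
  Pr B * t <= \sum_E pr_set E * Y E.
Proof.
move=> Y0 tY; rewrite /Pr mulr_suml [X in _ <= X](bigID B) /=.
rewrite -[X in X <= _]addr0 lerD //; last first.
  by apply: sumr_ge0 => E _; rewrite mulr_ge0 ?pr_set_ge0.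
by apply: ler_sum => E BE; rewrite ler_wpM2l ?pr_set_ge0 ?tY.
Qed.

Lemma Pr_le_prod (A : {set X}) (B : pred {set X}) (x t : R) :
  0 <= x -> (forall E, B E -> t <= x ^+ #|A :&: E|) ->
  Pr B * t <= \prod_(e in A) (1 + q e * (x - 1)).
Proof.
by move=> x0 Bt; rewrite -sum_pr_set_pow; apply: Pr_le_moment => // E; rewrite exprn_ge0.
Qed.

Lemma Pr_lt1_exists (B : pred {set X}) :
  Pr B < 1 -> exists E, pr_set E != 0 /\ ~~ B E.
Proof.
move=> PrB; case: (pickP [pred E | (pr_set E != 0) && ~~ B E]) => [E /andP[]|none].
  by exists E.
suff : Pr B = 1 by move=> PrB1; rewrite PrB1 ltxx in PrB.
rewrite -sum_pr_set (bigID B) /= [X in _ + X]big1 ?addr0 // => E nBE.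
by apply/eqP; move: (none E) => /=; rewrite nBE andbT => /negbFE.
Qed.

End RandomSubset.

Section PairSets.
Variable V : finType.

Definition sets_ST (S T : {set V}) : {set {set V}} :=
  [set e : {set V} | (e \subset S :|: T) && (e :&: S != set0)].

Definition pairs_of (A : {set {set V}}) : {set {set V}} := [set e in A | #|e| == 2].

Lemma card_pairs_of_setT : #|pairs_of setT| = 'C(#|V|, 2).
Proof. by rewrite /pairs_of setIdE setTI card_draws. Qed.

Lemma edges_STE (E : {set {set V}}) S T : edges_ST E S T = sets_ST S T :&: E.
Proof. by rewrite /edges_ST setIdE setIC. Qed.

Lemma card_pairs_ST (S T : {set V}) :
  #|pairs_of (sets_ST S T)| <= 'C(#|S|, 2) + #|S| * #|T|.
Proof.
pose pair (st : V * V) := [set st.1; st.2].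
pose P := [set e : {set V} | e \subset S & #|e| == 2] :|: pair @: setX S T.
have pairP a b : a \in S -> b \in S :|: T -> a != b -> [set a; b] \in P.
  move=> aS /setUP[bS|bT] nab; apply/setUP.
    by left; rewrite inE cards2 nab subUset !sub1set aS bS.
  by right; apply/imsetP; exists (a, b); rewrite ?inE ?aS.
have sub : pairs_of (sets_ST S T) \subset P.
  apply/subsetP => e /setIdP[]; rewrite inE => /andP[sST nS] /cards2P[x [y [nxy exy]]].
  move: sST nS; rewrite {}exy => sST nS.
  case/set0Pn: nS => z /setIP[/set2P[]-> zS].
    by apply: pairP; rewrite // (subsetP sST) ?set22.
  by rewrite setUC; apply: pairP; rewrite 1?eq_sym // (subsetP sST) ?set21.
rewrite (leq_trans (subset_leq_card sub)) // cardsU (leq_trans (leq_subr _ _)) //.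
by rewrite cards_draws leq_add2l (leq_trans (leq_imset_card _ _)) // cardsX.
Qed.

End PairSets.

(* ring_scope sits under R_scope so that \sum and \prod over R denote the ring
   big operators while arithmetic and order are those of Stdlib. *)
Open Scope ring_scope.
Open Scope R_scope.

Lemma exp_le_exp x y : x <= y -> exp x <= exp y.
Proof. by move=> [/exp_increasing/Rlt_le | ->] //; right. Qed.

Lemma ln_le_ln x y : 0 < x -> x <= y -> ln x <= ln y.
Proof. by move=> x0 [/(ln_increasing _ _ x0)/Rlt_le | ->] //; right. Qed.

Lemma ln_le_sub1 x : 0 < x -> ln x <= x - 1.
Proof. by move=> x0; have := exp_ineq1_le (ln x); rewrite exp_ln //; lra. Qed.

Lemma ln_ge_1_sub_inv x : 0 < x -> 1 - / x <= ln x.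
Proof.
move=> x0; have := ln_le_sub1 (Rinv_0_lt_compat _ x0).
by rewrite ln_Rinv //; lra.
Qed.

Lemma pow_exp_ln x n : 0 < x -> x ^ n = exp (INR n * ln x).
Proof. by move=> x0; rewrite -Rpower_pow. Qed.

Lemma exp_pow x n : exp x ^ n = exp (INR n * x).
Proof. by rewrite pow_exp_ln ?ln_exp //; exact: exp_pos. Qed.

Lemma exp1_le : exp 1 <= 2.8.
Proof.
have h : (1 - / 20) ^ 20 <= exp (-1).
  have -> : -1 = INR 20 * (- / 20) by simpl; field.
  rewrite -exp_pow; apply: pow_incr; split; first lra.
  by have := exp_ineq1_le (- / 20); lra.
have : exp (-1) * exp 1 = 1 by rewrite -exp_plus Rplus_opp_l exp_0.
by have := exp_pos 1; simpl in h; nra.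
Qed.

Lemma exp1_ge : (1 + / 20) ^ 20 <= exp 1.
Proof.
have -> : exp 1 = exp (INR 20 * / 20) by congr exp; simpl; field.
rewrite -exp_pow; apply: pow_incr; split; first lra.
by have := exp_ineq1_le (/ 20); lra.
Qed.

Lemma ln2_ge : 2 / 3 <= ln 2.
Proof.
rewrite -(ln_exp (2 / 3)); apply: ln_le_ln; first exact: exp_pos.
have e3 : exp (2 / 3) ^ 3 <= 8.
  rewrite exp_pow (_ : INR 3 * (2 / 3) = 1 + 1); last by simpl; field.
  by rewrite exp_plus; have := exp1_le; have := exp_pos 1; nra.
apply: Rnot_lt_le => hc; have := exp_pos (2 / 3); simpl in e3; nra.
Qed.

Lemma ln7_le : ln 7 <= 2.
Proof.
rewrite -(ln_exp 2); apply: ln_le_ln; first lra.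
rewrite (_ : 2 = 1 + 1) ?exp_plus; last ring.
by have := exp1_ge; simpl; nra.
Qed.

Lemma INR_muln a b : INR (muln a b) = INR a * INR b.
Proof. exact: mult_INR. Qed.

Lemma ffact_leq_expn n m : (n ^_ m <= expn n m)%nat.
Proof.
elim: m => [|m IH]; first by rewrite ffactn0 expn0.
by rewrite ffactnSr expnSr leq_mul // leq_subr.
Qed.

Lemma succ_pow_le n : INR n.+1 ^ n <= exp 1 * INR n ^ n.
Proof.
case: n => [|n]; first by have := exp_ineq1_le 1; simpl; lra.
have n0 : 0 < INR n.+1 by apply: lt_0_INR; lia.
have h : INR n.+2 <= INR n.+1 * exp (/ INR n.+1).
  have := exp_ineq1_le (/ INR n.+1); rewrite (S_INR n.+1).
  by move/(Rmult_le_compat_l _ _ _ (Rlt_le _ _ n0)); rewrite Rmult_plus_distr_l Rinv_r; lra.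
apply: (Rle_trans _ ((INR n.+1 * exp (/ INR n.+1)) ^ n.+1)).
  by apply: pow_incr; split; [exact: pos_INR | exact: h].
by rewrite Rpow_mult_distr exp_pow Rinv_r ?Rmult_1_r; lra.
Qed.

Lemma pow_le_exp_fact n : INR n ^ n <= exp (INR n) * INR n`!.
Proof.
elim: n => [|n IH]; first by rewrite /= exp_0; lra.
rewrite factS INR_muln -tech_pow_Rmult S_INR exp_plus -S_INR.
have e0 := Rlt_le _ _ (exp_pos 1).
apply: (Rle_trans _ (INR n.+1 * (exp 1 * INR n ^ n))).
  exact: Rmult_le_compat_l (pos_INR _) (succ_pow_le n).
have := Rmult_le_compat_l _ _ _ (pos_INR n.+1) (Rmult_le_compat_l _ _ _ e0 IH).
lra.
Qed.

Lemma INR_expn a b : INR (expn a b) = INR a ^ b.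
Proof. by rewrite RpowE !INRE natrX. Qed.

Lemma binomial_le k N : (0 < k)%nat -> INR 'C(N, k) <= exp (INR k) * (INR N / INR k) ^ k.
Proof.
move=> k0; have kR : 0 < INR k by apply: lt_0_INR; apply/ssrnat.ltP.
have binN : INR 'C(N, k) * INR k`! <= INR N ^ k.
  rewrite -INR_muln bin_ffact -INR_expn; apply: le_INR; apply/ssrnat.leP.
  exact: ffact_leq_expn.
have kk := pow_lt _ k kR.
apply: (Rmult_le_reg_r (INR k ^ k)) => //.
have -> : exp (INR k) * (INR N / INR k) ^ k * INR k ^ k = exp (INR k) * INR N ^ k.
  by rewrite Rpow_mult_distr pow_inv; field; lra.
apply: (Rle_trans _ (INR 'C(N, k) * (exp (INR k) * INR k`!))).
  exact: Rmult_le_compat_l (pos_INR _) (pow_le_exp_fact k).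
have := Rmult_le_compat_l _ _ _ (Rlt_le _ _ (exp_pos (INR k))) binN.
lra.
Qed.

Lemma prod_exp (I : finType) (A : {set I}) (f : I -> R) :
  \prod_(i in A) exp (f i) = exp (\sum_(i in A) f i).
Proof. by rewrite (big_morph exp exp_plus exp_0). Qed.

Lemma sum_le_card (I : finType) (A : {set I}) (F : I -> R) (c : R) :
  (forall i, i \in A -> F i <= c) -> \sum_(i in A) F i <= INR #|A| * c.
Proof.
move=> Fc; rewrite [INR _]INRE [_ * c]RmultE mulr_natl -sumr_const.
by apply/RleP/ler_sum => i /Fc /RleP.
Qed.

(* For x > 1 the hypothesis on B says K <= #|A :&: E|, for x < 1 it says
   #|A :&: E| <= K: one statement gives both tails. *)
Lemma chernoff (X : finType) (q : X -> R) (A : {set X}) (B : pred {set X}) (x K : R) :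
  (forall e, 0 <= q e <= 1) -> 0 < x ->
  (forall E, B E -> K * ln x <= INR #|A :&: E| * ln x) ->
  Pr q B <= exp ((x - 1) * \sum_(e in A) q e - K * ln x).
Proof.
move=> q01 x0 BK.
have q01' e : Num.le 0 (q e) && Num.le (q e) 1 by case: (q01 e) => /RleP-> /RleP->.
have tail E : B E -> Num.le (exp (K * ln x)) (x ^+ #|A :&: E|).
  by move=> /BK KE; apply/RleP; rewrite -RpowE pow_exp_ln //; exact: exp_le_exp.
have /RleP PrB := Pr_le_prod q01' (introT RleP (Rlt_le _ _ x0)) tail.
have prodA : \prod_(e in A) (1 + q e * (x - 1)) <= exp ((x - 1) * \sum_(e in A) q e).
  have factor c : 0 <= c <= 1 -> 0 <= 1 + c * (x - 1) <= exp ((x - 1) * c).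
    by move=> c01; have := exp_ineq1_le ((x - 1) * c); nra.
  rewrite RmultE mulr_sumr -prod_exp; apply/RleP/ler_prod => e _.
  by have [/RleP ? /RleP ?] := factor _ (q01 e); apply/andP.
apply: (Rmult_le_reg_r (exp (K * ln x))); first exact: exp_pos.
by rewrite -exp_plus Rplus_assoc Rplus_opp_l Rplus_0_r; exact: Rle_trans PrB prodA.
Qed.

Lemma INR_bin2 N : 2 * INR 'C(N, 2) = INR N * (INR N - 1).
Proof.
case: N => [|N]; first by rewrite bin0n /=; lra.
have := bin_ffact N.+1 2; rewrite ffactSS ffactn1.
by move/(congr1 INR); rewrite !INR_muln (S_INR N) INR_1 (_ : INR 2 = 2); [nra | simpl; lra].
Qed.

Section RandomGraph.
Variable V : finType.

(* The random graph G(V, p) as a random subset of {set V} in which only the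
   2-element sets have positive probability. *)
Definition pair_prob (p : R) (e : {set V}) : R := if (#|e| == 2)%nat then p else 0.

Lemma pair_prob01 p e : 0 <= p <= 1 -> 0 <= pair_prob p e <= 1.
Proof. by rewrite /pair_prob; case: (#|e| == 2)%nat; lra. Qed.

Lemma sum_pair_prob p (A : {set {set V}}) :
  \sum_(e in A) pair_prob p e = p * INR #|pairs_of A|.
Proof. by rewrite -big_mkcondr -big_set sumr_const INRE RmultE mulr_natr. Qed.

Lemma pr_set_pair_prob_card p (E : {set {set V}}) e :
  pr_set (pair_prob p) E != 0 -> e \in E -> #|e| = 2%nat.
Proof.
move=> /eqP nz eE; case: (boolP (#|e| == 2)%nat) => [/eqP // | ne2].
by case: nz; apply: (pr_set_eq0 eE); rewrite /pair_prob (negbTE ne2).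
Qed.

End RandomGraph.

Lemma dense_pairs_exponent (n L : R) : 0 < n -> 2 / 3 <= L ->
  2 * (n * (1 + ln 7 + L)) + (33 * L * n - 70 * L * n * ln 2) <= - n.
Proof.
move=> n0 L23.
have := ln7_le; have := ln2_ge => ln2 ln7.
have : 0 <= (2 - ln 7) * n by apply: Rmult_le_pos; lra.
have : 0 <= L * n * (ln 2 - 2 / 3) by repeat apply: Rmult_le_pos; lra.
have : 0 <= (L - 2 / 3) * n by apply: Rmult_le_pos; lra.
lra.
Qed.

Lemma edge_mean_eq (r n L C : R) : 0 < n -> 2 * C = 7 * r * n * (7 * r * n - 1) ->
  22 * L / n * C = 77 * L * r * (7 * r * n - 1).
Proof.
move=> n0 C2; have -> : 22 * L / n * C = 11 * L / n * (2 * C) by field; lra.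
by rewrite C2; field; lra.
Qed.

Lemma many_edges_exponent (r n L C : R) : 2 <= r -> 0 < n -> 2 / 3 <= L ->
  2 * C = 7 * r * n * (7 * r * n - 1) ->
  (21 / 20 - 1) * (22 * L / n * C) - 600 * L * r ^ 2 * n * ln (21 / 20) <= - n.
Proof.
move=> r2 n0 L23 C2; rewrite (edge_mean_eq _ n0 C2).
have ln21 : 1 / 21 <= ln (21 / 20).
  have h : 0 < 21 / 20 by lra.
  by have := ln_ge_1_sub_inv h; rewrite (_ : / (21 / 20) = 20 / 21); [lra | field].
have Lr : 0 <= L * r by nra.
have Lr2 : 8 / 3 <= L * r ^ 2 by nra.
have : 0 <= (L * r ^ 2 - 8 / 3) * n by apply: Rmult_le_pos; lra.
have : 0 <= L * r ^ 2 * n * (ln (21 / 20) - 1 / 21) by repeat apply: Rmult_le_pos; lra.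
nra.
Qed.

Lemma few_edges_exponent (r n L C : R) : 2 <= r -> 22 * r <= n -> 2 / 3 <= L ->
  2 * C = 7 * r * n * (7 * r * n - 1) ->
  (49 / 50 - 1) * (22 * L / n * C) - 500 * L * r ^ 2 * n * ln (49 / 50) <= - n.
Proof.
move=> r2 nr L23 C2; rewrite (edge_mean_eq _ _ C2); last lra.
have ln49 : - 1 / 49 <= ln (49 / 50).
  have h : 0 < 49 / 50 by lra.
  by have := ln_ge_1_sub_inv h; rewrite (_ : / (49 / 50) = 50 / 49); [lra | field].
have Lr : 4 / 3 <= L * r by nra.
have : 0 <= L * r ^ 2 * n * (ln (49 / 50) + 1 / 49).
  by repeat apply: Rmult_le_pos; try lra; nra.
have : 0 <= (L * r - 4 / 3) * (r * n - 2 * n) by apply: Rmult_le_pos; nra.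
nra.
Qed.

Section Construction.
Variables r n : nat.
Hypotheses (r2 : (2 <= r)%nat) (nr : (22 * r <= n)%nat).

Local Notation V := 'I_(7 * r * n).
Local Notation L := (ln (INR r)).

Definition edge_density : R := 22 * L / INR n.

Local Notation q := (pair_prob (V := V) edge_density).

Definition n_sets : {set {set V}} := [set S : {set V} | #|S| == n].

Definition dense_in (S T : {set V}) : pred {set {set V}} :=
  fun E => Num.le (70 * L * INR n) (INR #|edges_ST E S T|).

Definition dense_pair : pred {set {set V}} :=
  fun E => [exists ST in setX n_sets n_sets, dense_in ST.1 ST.2 E].

Definition many_edges : pred {set {set V}} :=
  fun E => Num.le (600 * L * INR (r ^ 2) * INR n) (INR #|E|).

Definition few_edges : pred {set {set V}} :=
  fun E => Num.le (INR #|E|) (500 * L * INR (r ^ 2) * INR n).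

Definition bad_graph : pred {set {set V}} :=
  fun E => [|| dense_pair E, many_edges E | few_edges E].

Let r_ge2 : 2 <= INR r.
Proof. by have := le_INR _ _ (ssrnat.leP r2); rewrite /=; lra. Qed.

Let n_ge : 22 * INR r <= INR n.
Proof. by have := le_INR _ _ (ssrnat.leP nr); rewrite INR_muln /=; lra. Qed.

Let L_ge : 2 / 3 <= L.
Proof. by apply: Rle_trans ln2_ge _; apply: ln_le_ln; lra. Qed.

Let INR_7rn : INR (7 * r * n) = 7 * INR r * INR n.
Proof. by rewrite !INR_muln /=; lra. Qed.

Lemma edge_density01 : 0 <= edge_density <= 1.
Proof.
have r0 : 0 < INR r by lra.
have := ln_le_sub1 r0; rewrite /edge_density; split.
  by apply: Rmult_le_pos; [lra | apply/Rlt_le/Rinv_0_lt_compat; lra].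
by apply: (Rmult_le_reg_r (INR n)); [lra | rewrite /Rdiv Rmult_assoc Rinv_l; lra].
Qed.

Let q01 e : 0 <= q e <= 1 := pair_prob01 e edge_density01.

Let q01b e : Num.le 0 (q e) && Num.le (q e) 1.
Proof. by have [/RleP-> /RleP->] := q01 e. Qed.

Lemma card_n_sets_le : INR #|n_sets| <= exp (INR n * (1 + ln 7 + L)).
Proof.
have n0 : (0 < n)%nat by apply: leq_trans _ nr; rewrite muln_gt0 (ltnW r2).
rewrite /n_sets card_draws card_ord; apply: Rle_trans (binomial_le _ n0) _.
rewrite INR_7rn (_ : 7 * INR r * INR n / INR n = 7 * INR r); last by field; lra.
rewrite pow_exp_ln ?ln_mult -?exp_plus; try lra.
by right; congr exp; ring.
Qed.

Lemma Pr_dense_in (S T : {set V}) : #|S| = n -> #|T| = n ->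
  Pr q (dense_in S T) <= exp (33 * L * INR n - 70 * L * INR n * ln 2).
Proof.
move=> hS hT; have ln2 := ln2_ge.
apply: Rle_trans (chernoff (A := sets_ST S T) (x := 2) (K := 70 * L * INR n)
  q01 _ _) _.
- lra.
- move=> E /RleP; rewrite edges_STE => KE.
  by apply: Rmult_le_compat_r KE; lra.
apply: exp_le_exp; rewrite sum_pair_prob.
suff : edge_density * INR #|pairs_of (sets_ST S T)| <= 33 * L * INR n by lra.
have := le_INR _ _ (ssrnat.leP (card_pairs_ST S T)).
rewrite plus_INR INR_muln hS hT => card.
have n0 : 0 < INR n by lra.
have c32 : INR #|pairs_of (sets_ST S T)| <= 3 / 2 * (INR n * INR n).
  by have := INR_bin2 n; nra.
apply: (Rle_trans _ (22 * L / INR n * (3 / 2 * (INR n * INR n)))).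
  apply: Rmult_le_compat_l c32; apply: Rmult_le_pos; [lra | exact/Rlt_le/Rinv_0_lt_compat].
by right; field; lra.
Qed.

Lemma Pr_dense_pairs : Pr q dense_pair <= exp (- INR n).
Proof.
set c := 33 * L * INR n - 70 * L * INR n * ln 2.
apply: Rle_trans (elimT RleP (Pr_exists_le q01b (mem (setX n_sets n_sets))
  (fun ST => dense_in ST.1 ST.2))) _.
apply: Rle_trans (_ : _ <= INR #|setX n_sets n_sets| * exp c) _.
  apply: sum_le_card => -[S T].
  by rewrite in_setX !inE => /andP[/eqP hS /eqP hT]; exact: Pr_dense_in.
have Nle := card_n_sets_le; set N := exp (INR n * (1 + ln 7 + L)) in Nle.
rewrite cardsX INR_muln; apply: Rle_trans (_ : _ <= N * N * exp c) _.
  apply: Rmult_le_compat_r; first exact/Rlt_le/exp_pos.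
  exact: (Rmult_le_compat _ _ _ _ (pos_INR _) (pos_INR _) Nle Nle).
rewrite /N -!exp_plus; apply: exp_le_exp.
have n0 : 0 < INR n by lra.
by have := dense_pairs_exponent n0 L_ge; rewrite /c; lra.
Qed.

Lemma Pr_many_edges : Pr q many_edges <= exp (- INR n).
Proof.
apply: Rle_trans (chernoff (A := setT) (x := 21 / 20) (K := 600 * L * INR (r ^ 2) * INR n)
  q01 _ _) _.
- lra.
- move=> E /RleP; rewrite setTI => KE; apply: Rmult_le_compat_r KE.
  by left; rewrite -ln_1; apply: ln_increasing; lra.
apply: exp_le_exp; rewrite sum_pair_prob card_pairs_of_setT card_ord pow_INR.
by apply: many_edges_exponent => //; [lra | rewrite INR_bin2 INR_7rn].
Qed.

Lemma Pr_few_edges : Pr q few_edges <= exp (- INR n).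
Proof.
apply: Rle_trans (chernoff (A := setT) (x := 49 / 50) (K := 500 * L * INR (r ^ 2) * INR n)
  q01 _ _) _.
- lra.
- move=> E /RleP; rewrite setTI => EK.
  have x0 : 0 < 49 / 50 by lra.
  have ln0 : ln (49 / 50) <= 0 by have := ln_le_sub1 x0; lra.
  by have := Rmult_le_compat_neg_l _ _ _ ln0 EK; rewrite !(Rmult_comm (ln _)).
apply: exp_le_exp; rewrite sum_pair_prob card_pairs_of_setT card_ord pow_INR.
by apply: few_edges_exponent => //; rewrite INR_bin2 INR_7rn.
Qed.

Lemma Pr_bad_graph_lt1 : Pr q bad_graph < 1.
Proof.
have U1 : Pr q bad_graph <= Pr q dense_pair + Pr q (predU many_edges few_edges).
  by rewrite RplusE; apply/RleP/(Pr_predU q01b).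
have U2 : Pr q (predU many_edges few_edges) <= Pr q many_edges + Pr q few_edges.
  by rewrite RplusE; apply/RleP/(Pr_predU q01b).
have : 3 * exp (- INR n) < 1.
  have en : 3 < exp (INR n) by have := exp_ineq1_le (INR n); lra.
  rewrite exp_Ropp; apply: (Rmult_lt_reg_r (exp (INR n))); first exact: exp_pos.
  by rewrite Rmult_assoc Rinv_l; lra.
have := Pr_dense_pairs; have := Pr_many_edges; have := Pr_few_edges; lra.
Qed.

End Construction.

Close Scope R_scope.
Close Scope ring_scope.

Theorem proposition2p1 :
  forall r : nat, (2 <= r)%N ->
  exists N : nat, forall n : nat, (N <= n)%N ->
    exists E : {set {set 'I_(7 * r * n)}},
      simple_edges E /\
      (500 * ln (INR r) * INR (r ^ 2) * INR n < INR #|E|)%R /\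
      (INR #|E| < 600 * ln (INR r) * INR (r ^ 2) * INR n)%R /\
      (forall S T : {set 'I_(7 * r * n)},
          [disjoint S & T] -> #|S| = n -> #|T| = n ->
          (INR #|edges_ST E S T| <= 70 * ln (INR r) * INR n)%R).
Proof.
move=> r r2; exists (22 * r)%nat => n nr.
have /RltP/Pr_lt1_exists [E [nzE]] := Pr_bad_graph_lt1 r2 nr.
rewrite /bad_graph !negb_or => /and3P[/existsPn dense many few].
exists E; split; [|split; [|split]].
- by move=> e; exact: pr_set_pair_prob_card nzE.
- by apply/RltP; rewrite ltNge.
- by apply/RltP; rewrite ltNge.
- move=> S T _ hS hT; apply/Rlt_le/RltP; rewrite ltNge.
  by have := dense (S, T); rewrite in_setX !inE hS hT eqxx.
Qed.
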